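(* Let $H$ be any hypergraph. If there exist a hypergraph $H'$ and an integer $s\ge 2$ such that $H'\subseteq H\subseteq H'(s)$, then $\pi(H)=\pi(H')$.
   Context: A hypergraph $H=(V,E)$ has finite vertex set $V$ and edge set $E\subseteq 2^V$; $R(H)=\{|F|:F\in E\}$. $H_1\subseteq H_2$ means there is an injective $f\colon V(H_1)\to V(H_2)$ with $f(F)\in E(H_2)$ for all $F\in E(H_1)$. For $G$ on $n$ vertices, $h_n(G)=\sum_{F\in E(G)}1/\binom{n}{|F|}$; $\pi_n(H)=\max\{h_n(G): G\text{ on } n \text{ vertices}, R(G)\subseteq R(H), H\not\subseteq G\}$, $\pi(H)=\lim_n\pi_n(H)$. For $H$ on vertex set $\{1,\dots,m\}$, the blowup $H(s)$ has vertex set $V_1\sqcup\dots\sqcup V_m$ with $|V_i|=s$ and edge set $\bigcup_{F\in E(H)}\prod_{i\in F}V_i$. *)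

From HB Require Import structures.
From mathcomp Require Import all_boot all_order all_algebra.
From mathcomp Require Import all_classical all_reals all_analysis.
Set Implicit Arguments. Unset Strict Implicit. Unset Printing Implicit Defensive.
Import Order.TTheory GRing.Theory Num.Theory numFieldNormedType.Exports.
Local Open Scope ring_scope.

Record hypergraph := Hypergraph { hV : finType; hE : {set {set hV}} }.

Definition hsub (H1 H2 : hypergraph) : bool :=
  [exists f : {ffun hV H1 -> hV H2},
     injectiveb f && [forall F in hE H1, (f @: F) \in hE H2]].

(* The blowup H(s): vertex set hV H x 'I_s (V_i = {i} x 'I_s), and for each
   edge F of H, all sets {(i, g i) : i in F} with g : hV H -> 'I_s,
   i.e. the product prod_{i in F} V_i. *)
Definition blowup (H : hypergraph) (s : nat) : hypergraph :=
  @Hypergraph (prod (hV H) 'I_s)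
    [set [set (i, g i) | i in F] | F : {set hV H} in hE H, g : {ffun hV H -> 'I_s}].

Definition hgraph_on (n : nat) (G : {set {set 'I_n}}) : hypergraph :=
  @Hypergraph 'I_n G.

Definition lubell (R : realType) (n : nat) (G : {set {set 'I_n}}) : R :=
  \sum_(F in G) ('C(n, #|F|)%:R)^-1.

Definition rsub (n : nat) (G : {set {set 'I_n}}) (H : hypergraph) : bool :=
  [forall F in G, [exists F' in hE H, #|F| == #|F'|]].

(* pi_n(H) = max { h_n(G) : G on n vertices, R(G) \subseteq R(H), H not\subseteq G }.
   (Max over an empty family defaults to 0; this only happens when H has no edges.) *)
Definition pi_n (R : realType) (H : hypergraph) (n : nat) : R :=
  \big[Num.max/0]_(G : {set {set 'I_n}} | rsub G H && ~~ hsub H (hgraph_on G))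
     lubell R G.

Definition hpi (R : realType) (H : hypergraph) : R := limn (pi_n R H).

(* Since H' embeds in H, every H'-free family is H-free, and H, H' have the
   same edge sizes, so pi_n(H') <= pi_n(H).  Conversely, fix N with
   pi_N(H') < pi(H') + e/2.  If h_n(G) >= pi(H') + e, averaging the Lubell
   function over the N-subsets A of [n] shows that a positive proportion of them
   carry local Lubell mass above pi_N(H'), so each of those contains a copy of
   H'; hence G contains d n^|V(H')| copies of H' (supersaturation).  Erdos'
   box argument (the power-mean inequality applied one coordinate at a time)
   then yields sets U_i of size s all of whose transversals are copies, that
   is H'(s), hence H, embeds in G.  So pi_n(H) <= pi(H') + e for large n.
   The same averaging shows that pi_n is eventually nonincreasing, so the
   limits exist. *)

From HB Require Import structures.
From mathcomp Require Import all_boot all_order all_algebra.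
From mathcomp Require Import all_classical all_reals all_analysis.
From mathcomp.algebra_tactics Require Import ring lra.
From mathcomp.zify Require Import zify.
Set Implicit Arguments. Unset Strict Implicit. Unset Printing Implicit Defensive.
Import Order.TTheory GRing.Theory Num.Theory numFieldNormedType.Exports.

Lemma imset_ffun (aT rT : finType) (f : aT -> rT) (A : {set aT}) :
  [ffun x => f x] @: A = f @: A.
Proof. by apply: eq_imset => x; rewrite ffunE. Qed.

Lemma hsubP (H1 H2 : hypergraph) :
  reflect (exists2 f : {ffun hV H1 -> hV H2}, injective f &
             forall F, F \in hE H1 -> f @: F \in hE H2) (hsub H1 H2).
Proof.
apply: (iffP existsP) => [[f /andP[/injectiveP fi /forall_inP fe]]|[f fi fe]].
  by exists f.
by exists f; apply/andP; split; [apply/injectiveP|apply/forall_inP].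
Qed.

Lemma hsub_trans (H1 H2 H3 : hypergraph) :
  hsub H1 H2 -> hsub H2 H3 -> hsub H1 H3.
Proof.
move=> /hsubP[f fi fe] /hsubP[g gi ge]; apply/hsubP.
exists [ffun x => g (f x)] => [x y|F FE].
  by rewrite !ffunE => /gi/fi.
by rewrite imset_ffun imset_comp; apply/ge/fe.
Qed.

Definition edge_sizes (H : hypergraph) : {pred nat} :=
  [pred k | [exists F in hE H, #|F| == k]].

Lemma edge_sizesP (H : hypergraph) k :
  reflect (exists2 F, F \in hE H & #|F| = k) (k \in edge_sizes H).
Proof.
by apply: (iffP exists_inP) => [[F FE /eqP]|[F FE <-]]; exists F.
Qed.

Lemma edge_sizes_hsub (H1 H2 : hypergraph) :
  hsub H1 H2 -> {subset edge_sizes H1 <= edge_sizes H2}.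
Proof.
move=> /hsubP[f fi fe] k /edge_sizesP[F FE <-]; apply/edge_sizesP.
by exists (f @: F); rewrite ?card_imset ?fe.
Qed.

Lemma edge_sizes_blowup (H : hypergraph) s :
  {subset edge_sizes (blowup H s) <= edge_sizes H}.
Proof.
move=> k /edge_sizesP[_ /imset2P[F g FE _ ->] <-]; apply/edge_sizesP.
by exists F; rewrite // card_imset // => x y [].
Qed.

Lemma rsubP n (G : {set {set 'I_n}}) (H : hypergraph) :
  reflect (forall F, F \in G -> #|F| \in edge_sizes H) (rsub G H).
Proof.
apply: (iffP forall_inP) => rG F /rG /exists_inP[F' F'E /eqP eF];
  by apply/exists_inP; exists F'; rewrite ?eF.
Qed.

Lemma rsub_edge_sizes n (G : {set {set 'I_n}}) (H1 H2 : hypergraph) :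
  {subset edge_sizes H1 <= edge_sizes H2} -> rsub G H1 -> rsub G H2.
Proof. by move=> sH /rsubP rG; apply/rsubP => F /rG /sH. Qed.

Definition copies (H : hypergraph) n (G : {set {set 'I_n}}) :
    {set {ffun hV H -> 'I_n}} :=
  [set f : {ffun hV H -> 'I_n} | injectiveb f && [forall F in hE H, f @: F \in G]].

Lemma copiesP (H : hypergraph) n (G : {set {set 'I_n}}) (f : {ffun hV H -> 'I_n}) :
  reflect (injective f /\ forall F, F \in hE H -> f @: F \in G) (f \in copies H G).
Proof.
rewrite inE; apply: (iffP andP) => [[/injectiveP fi /forall_inP fe]|[fi fe]] //.
by split; [apply/injectiveP | apply/forall_inP].
Qed.

Lemma blowup_hsub_box (H : hypergraph) s n (G : {set {set 'I_n}})
    (U : hV H -> {set 'I_n}) :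
  (forall i, #|U i| = s) ->
  (forall h : {ffun hV H -> 'I_n}, (forall i, h i \in U i) -> h \in copies H G) ->
  hsub (blowup H s) (hgraph_on G).
Proof.
move=> U_card box_copies.
pose u i (t : 'I_s) : 'I_n := enum_val (cast_ord (esym (U_card i)) t).
have u_inj i : injective (u i) by move=> t t' /enum_val_inj/cast_ord_inj.
have copy_u (g : hV H -> 'I_s) : [ffun i => u i (g i)] \in copies H G.
  by apply: box_copies => i; rewrite ffunE enum_valP.
apply/hsubP; exists [ffun p : hV H * 'I_s => u p.1 p.2] => [[i t] [i' t']|F'].
  rewrite !ffunE /= => e; case: (eqVneq i i') => [ii'|i_neq].
    by subst i'; rewrite (u_inj _ _ _ e).
  pose g x := if x == i then t else t'.
  have /copiesP[g_inj _] := copy_u g.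
  have : [ffun x => u x (g x)] i = [ffun x => u x (g x)] i'.
    by rewrite !ffunE /g eqxx eq_sym (negbTE i_neq).
  by move/g_inj/eqP; rewrite (negbTE i_neq).
case/imset2P=> F g FE _ ->; have /copiesP[_ ge] := copy_u g.
suff -> : [ffun p => u p.1 p.2] @: [set (i, g i) | i in F] =
          [ffun i => u i (g i)] @: F by apply: ge.
by rewrite -imset_comp; apply: eq_imset => x; rewrite /= !ffunE.
Qed.

Lemma bin_mul_subset (n N k : nat) : (k <= N <= n)%N ->
  ('C(n, k) * 'C(n - k, N - k) = 'C(n, N) * 'C(N, k))%N.
Proof.
case/andP=> kN Nn; have kn := leq_trans kN Nn.
have facts_gt0 : (0 < k`! * (N - k)`! * (n - N)`!)%N by rewrite !muln_gt0 !fact_gt0.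
apply/eqP; rewrite -(eqn_pmul2r facts_gt0); apply/eqP.
have sub_sub : (n - k - (N - k) = n - N)%N by lia.
have := bin_fact (leq_sub2r k Nn); rewrite sub_sub => eNk.
transitivity ('C(n, k) * (k`! * (n - k)`!))%N; first by rewrite -eNk; ring.
rewrite bin_fact // -(bin_fact Nn) -(bin_fact kN); ring.
Qed.

Lemma card_supsets (T : finType) (S : {set T}) N : (#|S| <= N)%N ->
  #|[set A : {set T} | S \subset A & #|A| == N]| = 'C(#|T| - #|S|, N - #|S|).
Proof.
move=> SN; rewrite -[#|T|](cardsC S) addKn -cards_draws.
have disjS (B : {set T}) : B \subset ~: S -> B :&: S = finset.set0.
  by rewrite -finset.disjoints_subset -setI_eq0 => /eqP.
rewrite -[in RHS](@card_in_imset _ _ (fun B => B :|: S)) => [|B1 B2]; last first.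
  rewrite !inE => /andP[B1S _] /andP[B2S _] /(congr1 (fun X => X :\: S)).
  by rewrite !finset.setDUl finset.setDv !finset.setU0 !finset.setDE !(finset.setIidPl _).
apply: eq_card => A; rewrite inE; apply/andP/imsetP => [[SA /eqP cA]|[B]].
  exists (A :\: S); last by rewrite finset.setUC -{1}(finset.setID A S) (finset.setIidPr SA).
  by rewrite inE finset.subsetDr cardsD (finset.setIidPr SA) cA eqxx.
rewrite inE => /andP[BS /eqP cB] ->; split; first exact: finset.subsetUr.
by rewrite cardsU disjS // cards0 subn0 cB subnK.
Qed.

Lemma card_set_sum (T : finType) (P : pred T) : #|[set x | P x]| = (\sum_x P x)%N.
Proof. by rewrite -sum1dep_card big_mkcond /=; apply: eq_bigr => x _; case: (P x). Qed.

Lemma card_bigcup_le (I T : finType) (P : pred I) (S : I -> {set T}) :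
  (#|\bigcup_(i | P i) S i| <= \sum_(i | P i) #|S i|)%N.
Proof.
apply: (big_ind2 (fun (X : {set T}) k => #|X| <= k)%N) => [|X1 k1 X2 k2 h1 h2|//].
  by rewrite cards0.
exact: leq_trans (leq_card_setU X1 X2) (leq_add h1 h2).
Qed.

Lemma ffact_le_expn n s : (n ^_ s <= n ^ s)%N.
Proof.
elim: s => // s IHs; rewrite ffactnSr expnSr leq_mul ?leq_subr //.
Qed.

Lemma expn_le_ffact n s : (n ^ s.+1 <= n ^_ s.+1 + s.+1 * s.+1 * n ^ s)%N.
Proof.
elim: s => [|s IHs]; first by rewrite ffactn1 expn1 expn0 leq_addr.
have dist : (n * n ^_ s.+1 <= n ^_ s.+2 + s.+1 * n ^ s.+1)%N.
  apply: (@leq_trans (n ^_ s.+1 * (n - s.+1) + s.+1 * n ^_ s.+1)).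
    by rewrite (mulnC s.+1) -mulnDr mulnC leq_mul2l addnC -leq_subLR leqnn orbT.
  by rewrite (ffactnSr n s.+1) leq_add2l leq_mul2l ffact_le_expn orbT.
rewrite expnS; apply: leq_trans (leq_mul (leqnn n) IHs) _.
rewrite mulnDr mulnCA -expnS; apply: leq_trans (leq_add dist (leqnn _)) _.
by rewrite -addnA leq_add2l -mulnDl leq_mul2r; apply/orP; right; nia.
Qed.

Lemma expn_sub_le_ffact n m : ((n - m) ^ m <= n ^_ m)%N.
Proof.
elim: m => // m IHm; rewrite ffactnSr expnSr leq_mul ?leq_sub2l //.
apply: leq_trans IHm; case: m => // m.
by rewrite leq_exp2r // leq_sub2l.
Qed.

Lemma expn_le_bin n m : (2 * m <= n)%N -> (n ^ m <= 'C(n, m) * (2 ^ m * m`!))%N.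
Proof.
case: m => [|m] mn; first by rewrite bin0.
rewrite mulnCA bin_ffact; apply: leq_trans (_ : (2 * (n - m.+1)) ^ m.+1 <= _)%N.
  by rewrite leq_exp2r //; lia.
by rewrite expnMn leq_mul2l expn_sub_le_ffact orbT.
Qed.

Lemma card_noninjective_ffun n s :
  (#|~: [set y : {ffun 'I_s.+1 -> 'I_n} | injectiveb y]| <= s.+1 * s.+1 * n ^ s)%N.
Proof.
have := cardsC [set y : {ffun 'I_s.+1 -> 'I_n} | injectiveb y].
by rewrite card_inj_ffuns card_ffun !card_ord; have := expn_le_ffact n s; lia.
Qed.

Local Open Scope ring_scope.

Section RealAverages.
Variable R : realDomainType.

Lemma ler_cross_exp (a b : R) k : 0 <= a -> 0 <= b ->
  a * b ^+ k.+1 + b * a ^+ k.+1 <= a ^+ k.+2 + b ^+ k.+2.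
Proof.
move=> a0 b0.
have same_sign : 0 <= (a - b) * (a ^+ k.+1 - b ^+ k.+1).
  have [ab|/ltW ba] := leP a b.
    by rewrite mulr_le0 // subr_le0 // lerXn2r ?nnegrE.
  by rewrite mulr_ge0 // subr_ge0 // lerXn2r ?nnegrE.
move: same_sign; rewrite !(exprS _ k.+1).
set P := a ^+ k.+1; set Q := b ^+ k.+1; nra.
Qed.

Lemma chebyshev_sum_exp (T : finType) (a : T -> R) k : (forall x, 0 <= a x) ->
  (\sum_x a x) * (\sum_x a x ^+ k.+1) <= #|T|%:R * \sum_x a x ^+ k.+2.
Proof.
move=> a0.
have e1 : (\sum_x a x) * (\sum_x a x ^+ k.+1) = \sum_x \sum_y a x * a y ^+ k.+1.
  exact: big_distrlr.
have e2 : (\sum_x a x) * (\sum_x a x ^+ k.+1) = \sum_x \sum_y a y * a x ^+ k.+1.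
  by rewrite e1 exchange_big.
have e3 : #|T|%:R * \sum_x a x ^+ k.+2 = \sum_x \sum_(y : T) a x ^+ k.+2.
  by rewrite mulr_sumr; apply: eq_bigr => x _; rewrite sumr_const mulr_natl.
have e4 : #|T|%:R * \sum_x a x ^+ k.+2 = \sum_(x : T) \sum_(y : T) a y ^+ k.+2.
  by rewrite e3 exchange_big.
rewrite -(ler_pM2l (ltr0n _ 2%N)) [X in X <= _]mulr_natl [X in _ <= X]mulr_natl.
rewrite !mulr2n {1}e1 e2 {1}e3 e4.
rewrite -!big_split; apply: ler_sum => x _; rewrite -!big_split; apply: ler_sum => y _.
exact: ler_cross_exp.
Qed.

Lemma power_mean_sum (T : finType) (a : T -> R) k : (forall x, 0 <= a x) ->
  (\sum_x a x) ^+ k.+1 <= #|T|%:R ^+ k * \sum_x a x ^+ k.+1.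
Proof.
move=> a0; elim: k => [|k IHk]; first by rewrite expr0 mul1r.
have sum_ge0 : 0 <= \sum_x a x by apply: sumr_ge0.
rewrite exprS; apply: le_trans (ler_wpM2l sum_ge0 IHk) _.
rewrite mulrCA exprSr -mulrA ler_wpM2l ?exprn_ge0 ?ler0n //.
exact: chebyshev_sum_exp.
Qed.

Lemma exists_ge_mean (T : finType) (A : {pred T})
    (F : T -> R) b :
  (0 < #|A|)%N -> #|A|%:R * b <= \sum_(x in A) F x -> exists2 x, x \in A & b <= F x.
Proof.
move=> A_gt0 Ab; case: (pickP [pred x | (x \in A) && (b <= F x)]) => [x /andP[]|none].
  by exists x.
suff : \sum_(x in A) F x < #|A|%:R * b by rewrite ltNge Ab.
rewrite mulr_natl -sumr_const; apply: ltr_sum => [|x Ax].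
  by case/card_gt0P: A_gt0 => x Ax; apply/hasP; exists x; rewrite ?mem_index_enum.
by have := none x; rewrite /= Ax /= => /negbT; rewrite -ltNge.
Qed.

Lemma reverse_markov (T : finType) (A : {pred T})
    (f : T -> R) (M c e : R) :
  0 <= c -> (forall x, x \in A -> f x <= M) ->
  #|A|%:R * (c + e) <= \sum_(x in A) f x ->
  #|A|%:R * e <= #|[set x in A | c < f x]|%:R * M.
Proof.
move=> c0 fM Af; have : \sum_(x in A) f x <= #|[set x in A | c < f x]|%:R * M + #|A|%:R * c.
  rewrite (bigID (fun x => c < f x)) /= lerD //.
    have -> : #|[set x in A | c < f x]|%:R * M = \sum_(x in A | c < f x) M.
      by rewrite mulr_natl -sumr_const; apply: eq_bigl => x; rewrite inE.
    by apply: ler_sum => x /andP[/fM].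
  apply: le_trans (_ : \sum_(x in A | ~~ (c < f x)) c <= _).
    by apply: ler_sum => x /andP[_]; rewrite -leNgt.
  rewrite mulr_natl -sumr_const [X in _ <= X](bigID (fun x => c < f x)) /= lerDr.
  exact: sumr_ge0.
by move: Af; lra.
Qed.

End RealAverages.

(** * The numbers pi_n and their limit *)

Section PiN.
Variable R : realType.

Lemma lubell_ge0 n (G : {set {set 'I_n}}) : 0 <= lubell R G.
Proof. by apply: sumr_ge0 => F _; rewrite invr_ge0 ler0n. Qed.

Lemma pi_n_ge0 (H : hypergraph) n : 0 <= pi_n R H n.
Proof.
apply: (big_ind (fun x : R => 0 <= x)) => // [x y x0 _|G _].
  by rewrite le_max x0.
exact: lubell_ge0.
Qed.

Lemma lubell_le_pi_n (H : hypergraph) n (G : {set {set 'I_n}}) :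
  rsub G H -> ~~ hsub H (hgraph_on G) -> lubell R G <= pi_n R H n.
Proof.
by move=> rG nHG; rewrite /pi_n (bigD1 G) ?rG ?nHG //= le_max lexx.
Qed.

Lemma pi_n_le (H : hypergraph) n (b : R) : 0 <= b ->
  (forall G : {set {set 'I_n}},
     rsub G H -> ~~ hsub H (hgraph_on G) -> lubell R G <= b) ->
  pi_n R H n <= b.
Proof.
move=> b0 Gb; apply: (big_ind (fun x : R => x <= b)) => // [x y xb yb|G].
  by rewrite ge_max xb yb.
by case/andP; apply: Gb.
Qed.

Lemma pi_n_hsub (H' H : hypergraph) n : hsub H' H -> pi_n R H' n <= pi_n R H n.
Proof.
move=> H'H; apply: pi_n_le (pi_n_ge0 _ _) _ => G rG nH'G.
apply: lubell_le_pi_n; first exact: rsub_edge_sizes (edge_sizes_hsub H'H) rG.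
by apply: contra nH'G; apply: hsub_trans.
Qed.

Definition lubell_in (T : finType) (A : {set T}) (G : {set {set T}}) : R :=
  \sum_(F in G | F \subset A) ('C(#|A|, #|F|)%:R)^-1.

Definition embeds_in (H : hypergraph) (T : finType) (A : {set T})
    (G : {set {set T}}) :=
  exists f : {ffun hV H -> T},
    [/\ injective f, forall x, f x \in A & forall F, F \in hE H -> f @: F \in G].

Lemma lubell_in_relabel (T : finType) (A : {set T}) (G : {set {set T}}) :
  lubell_in A G =
  lubell R [set F : {set 'I_#|A|} | [set enum_val x | x in F] \in G].
Proof.
set e : 'I_#|A| -> T := enum_val.
have e_inj : injective e := @enum_val_inj _ _.
have eK (F : {set T}) : F \subset A -> e @: (e @^-1: F) = F.
  move=> FA; apply/setP => x; apply/imsetP/idP => [[y]|xF].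
    by rewrite inE => ? ->.
  have xA : x \in A := fintype.subsetP FA x xF.
  by exists (enum_rank_in xA x); rewrite ?inE /e enum_rankK_in.
rewrite /lubell_in /lubell.
rewrite (reindex_onto (fun F : {set 'I_#|A|} => e @: F) (fun F => e @^-1: F)).
  apply: eq_big => [F|F _]; last by rewrite card_imset.
  have eFA : e @: F \subset A by apply/fintype.subsetP => _ /imsetP[x _ ->]; apply: enum_valP.
  have eFK : e @^-1: (e @: F) == F by apply/eqP/setP => x; rewrite inE mem_imset.
  by rewrite inE eFA eFK !andbT.
by move=> F /andP[_ /eK].
Qed.

Lemma lubell_in_le_pi_n (H : hypergraph) (T : finType) (A : {set T})
    (G : {set {set T}}) :
  (forall F, F \in G -> F \subset A -> #|F| \in edge_sizes H) ->
  ~ embeds_in H A G -> lubell_in A G <= pi_n R H #|A|.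
Proof.
move=> rG nHA; rewrite lubell_in_relabel; apply: lubell_le_pi_n.
  apply/rsubP => F; rewrite inE => /rG; rewrite card_imset; last exact: enum_val_inj.
  by apply; apply/fintype.subsetP => _ /imsetP[x _ ->]; apply: enum_valP.
apply/hsubP => -[f fi fe]; apply: nHA.
exists [ffun x => enum_val (f x)]; split => [x y|x|F FE].
- by rewrite !ffunE => /enum_val_inj/fi.
- by rewrite ffunE enum_valP.
by move: (fe F FE); rewrite inE imset_ffun -imset_comp.
Qed.

Lemma lubell_in_le_exp (T : finType) (A : {set T}) (G : {set {set T}}) :
  lubell_in A G <= (2 ^ #|A|)%:R.
Proof.
apply: le_trans (_ : \sum_(F in G | F \subset A) 1%:R <= _).
  apply: ler_sum => F /andP[_ FA]; have FA_card := subset_leq_card FA.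
  by rewrite invf_le1 ?ltr0n ?ler1n ?bin_gt0.
rewrite -natr_sum ler_nat sum1dep_card -card_powerset subset_leq_card //.
by apply/fintype.subsetP => F; rewrite inE powersetE => /andP[].
Qed.

Lemma sum_lubell_in (T : finType) (G : {set {set T}}) N :
  (N <= #|T|)%N -> (forall F, F \in G -> #|F| <= N)%N ->
  \sum_(A : {set T} | #|A| == N) lubell_in A G =
  'C(#|T|, N)%:R * \sum_(F in G) ('C(#|T|, #|F|)%:R)^-1.
Proof.
move=> NT GN; rewrite mulr_sumr.
transitivity (\sum_(A : {set T} | #|A| == N) \sum_(F in G)
                (if F \subset A then ('C(N, #|F|)%:R : R)^-1 else 0)).
  by apply: eq_bigr => A /eqP <-; rewrite /lubell_in big_mkcondr.
rewrite exchange_big; apply: eq_bigr => F FG; rewrite -big_mkcondr /=.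
set k := #|F|; have kN : (k <= N)%N := GN F FG.
have -> : \sum_(A : {set T} | (#|A| == N) && (F \subset A)) ('C(N, k)%:R : R)^-1 =
          \sum_(A in [set A : {set T} | F \subset A & #|A| == N]) ('C(N, k)%:R)^-1.
  by apply: eq_bigl => A; rewrite inE andbC.
rewrite sumr_const card_supsets // -[X in X = _]mulr_natl.
have bin_neq0 (a b : nat) : (b <= a)%N -> ('C(a, b)%:R : R) != 0.
  by move=> ba; rewrite pnatr_eq0 -lt0n bin_gt0.
apply/eqP; rewrite eqr_div ?bin_neq0 ?(leq_trans kN) //; apply/eqP.
by rewrite -!natrM mulnC bin_mul_subset ?kN // mulnC.
Qed.

Lemma sum_lubell_in_ord n (G : {set {set 'I_n}}) N :
  (N <= n)%N -> (forall F, F \in G -> #|F| <= N)%N ->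
  \sum_(A : {set 'I_n} | #|A| == N) lubell_in A G = 'C(n, N)%:R * lubell R G.
Proof.
by move=> Nn GN; rewrite sum_lubell_in ?card_ord.
Qed.

Lemma sumr_draws_const (T : finType) N (c : R) :
  \sum_(A : {set T} | #|A| == N) c = 'C(#|T|, N)%:R * c.
Proof.
rewrite (eq_bigl (fun A => A \in [set A : {set T} | #|A| == N])) => [|A]; last by rewrite inE.
by rewrite sumr_const card_draws mulr_natl.
Qed.

Lemma pi_n_succ_le (H : hypergraph) n :
  (#|hV H| <= n)%N -> pi_n R H n.+1 <= pi_n R H n.
Proof.
move=> Hn; apply: pi_n_le (pi_n_ge0 _ _) _ => G rG nHG.
have Gn F : F \in G -> (#|F| <= n)%N.
  by move/(rsubP _ _ rG)/edge_sizesP => [F' _ <-]; apply: leq_trans (max_card _) Hn.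
have C_gt0 : 0 < 'C(n.+1, n)%:R :> R by rewrite ltr0n bin_gt0.
rewrite -(ler_pM2l C_gt0) -sum_lubell_in_ord // -[in X in _ <= X](card_ord n.+1).
rewrite -sumr_draws_const; apply: ler_sum => A /eqP cA.
rewrite -[X in pi_n R H X]cA; apply: lubell_in_le_pi_n.
  by move=> F FG _; apply: (rsubP _ _ rG).
by case=> f [fi _ fe]; case/hsubP: nHG; exists f.
Qed.

Lemma pi_n_le_mono (H : hypergraph) m n :
  (#|hV H| <= m <= n)%N -> pi_n R H n <= pi_n R H m.
Proof.
case/andP=> Hm; elim: n => [|n IHn]; first by rewrite leqn0 => /eqP ->.
rewrite leq_eqVlt => /orP[/eqP -> //|mn]; apply: le_trans (IHn mn).
exact/pi_n_succ_le/(leq_trans Hm mn).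
Qed.

End PiN.

Section Limit.
Variable R : realType.
Local Open Scope classical_set_scope.

Lemma pi_n_is_cvg (H : hypergraph) : cvgn (pi_n R H).
Proof.
apply: (@near_nonincreasing_is_cvgn _ _ 0); last by near=> n; apply: pi_n_ge0.
by exists #|hV H| => // k /= Hk n kn; apply: pi_n_le_mono; rewrite Hk.
Unshelve. all: by end_near.
Qed.

Lemma hpi_le_pi_n (H : hypergraph) n : (#|hV H| <= n)%N -> hpi R H <= pi_n R H n.
Proof.
move=> Hn; apply: limr_le; first exact: pi_n_is_cvg.
by near=> k; apply: pi_n_le_mono; rewrite Hn; near: k; exists n.
Unshelve. all: by end_near.
Qed.

Lemma hpi_ge0 (H : hypergraph) : 0 <= hpi R H.
Proof.
apply: limr_ge; first exact: pi_n_is_cvg.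
by near=> n; apply: pi_n_ge0.
Unshelve. all: by end_near.
Qed.

End Limit.

(** * Dense sets of functions contain boxes *)

Section FunctionUpdate.
Variables (I T : finType).

Definition fupd (g : {ffun I -> T}) (i0 : I) (y : T) : {ffun I -> T} :=
  [ffun x => if x == i0 then y else g x].

Lemma fupd_at g i0 y : fupd g i0 y i0 = y.
Proof. by rewrite ffunE eqxx. Qed.

Lemma fupd_id g i0 : fupd g i0 (g i0) = g.
Proof. by apply/ffunP => x; rewrite ffunE; case: eqP => // ->. Qed.

Lemma fupd_fupd g i0 y z : fupd (fupd g i0 y) i0 z = fupd g i0 z.
Proof. by apply/ffunP => x; rewrite !ffunE; case: eqP. Qed.

End FunctionUpdate.

Section AxisLines.
Variables (R : realType) (I : finType) (n s : nat).
Variables (W : {set {ffun I -> 'I_n}}) (i0 : I).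

Definition axis_line (g : {ffun I -> 'I_n}) := [set y | fupd g i0 y \in W].

Definition common_lines (y : {ffun 'I_s.+1 -> 'I_n}) :=
  [set g : {ffun I -> 'I_n} | [forall j, fupd g i0 (y j) \in W]].

Lemma sum_card_axis_line : (\sum_g #|axis_line g| = #|W| * n)%N.
Proof.
pose phi (p : {ffun I -> 'I_n} * 'I_n) := (fupd p.1 i0 p.2, p.1 i0).
have phiK : involutive phi by case=> g y; rewrite /phi /= fupd_at fupd_fupd fupd_id.
transitivity (\sum_(p : {ffun I -> 'I_n} * 'I_n) (p.1 \in W : nat))%N; last first.
  rewrite -(pair_bigA _ (fun g (y : 'I_n) => (g \in W : nat))) /=.
  rewrite -sum1_card big_distrl [RHS]big_mkcond /=; apply: eq_bigr => g _.
  by case: (g \in W) => /=; [rewrite mul1n sum_nat_const card_ord muln1 | rewrite big1].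
rewrite [RHS](reindex_inj (inv_inj phiK)).
rewrite -(pair_bigA _ (fun g y => (fupd g i0 y \in W : nat))) /=.
by apply: eq_bigr => g _; rewrite card_set_sum.
Qed.

Lemma card_tuples_axis_line g :
  #|[set y : {ffun 'I_s.+1 -> 'I_n} | [forall j, fupd g i0 (y j) \in W]]| =
  (#|axis_line g| ^ s.+1)%N.
Proof.
rewrite -[in RHS](card_ord s.+1) -card_ffun_on; apply: eq_card => y.
rewrite inE; apply/forallP/ffun_onP => yW j; have := yW j; by rewrite inE.
Qed.

Lemma sum_card_common_lines :
  (\sum_y #|common_lines y| = \sum_g #|axis_line g| ^ s.+1)%N.
Proof.
under eq_bigr do rewrite card_set_sum.
rewrite exchange_big; apply: eq_bigr => g _.
by rewrite -card_tuples_axis_line card_set_sum.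
Qed.

Hypothesis n_gt_s : (s < n)%N.

Lemma sum_card_common_lines_ge (d : R) : 0 <= d ->
  d * n%:R ^+ #|I| <= #|W|%:R ->
  d ^+ s.+1 * n%:R ^+ s.+1 * n%:R ^+ #|I| <= \sum_y (#|common_lines y|)%:R.
Proof.
move=> d0 dW; rewrite -natr_sum sum_card_common_lines natr_sum.
under eq_bigr do rewrite natrX.
have := @power_mean_sum R _ (fun g => (#|axis_line g|)%:R : R) s (fun _ => ler0n _ _).
rewrite -natr_sum sum_card_axis_line card_ffun card_ord natrX.
set X := n%:R ^+ #|I| in dW * => pm.
have X_gt0 : 0 < X by rewrite exprn_gt0 // ltr0n (leq_ltn_trans _ n_gt_s).
rewrite -(ler_pM2l (exprn_gt0 s X_gt0)); apply: le_trans pm.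
have -> : X ^+ s * (d ^+ s.+1 * n%:R ^+ s.+1 * X) = (d * X * n%:R) ^+ s.+1.
  by rewrite !exprMn (exprSr X s); ring.
rewrite natrM lerXn2r ?nnegrE ?mulr_ge0 ?ler0n ?(ltW X_gt0) //.
by rewrite ler_wpM2r ?ler0n.
Qed.

(* Double counting gives sum_y |common_lines y| = sum_g |axis_line g|^(s+1),
   which the power mean bounds below; non-injective tuples y are too few
   (at most (s+1)^2 n^s of n^(s+1)) to carry half of that sum. *)
Lemma exists_injective_common_lines (d : R) : 0 < d ->
  (2 * s.+1 * s.+1)%:R <= d ^+ s.+1 * n%:R ->
  d * n%:R ^+ #|I| <= #|W|%:R ->
  exists2 y : {ffun 'I_s.+1 -> 'I_n}, injective y &
    d ^+ s.+1 / 2 * n%:R ^+ #|I| <= #|common_lines y|%:R.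
Proof.
move=> d_gt0 n_large dW.
have := sum_card_common_lines_ge (ltW d_gt0) dW.
set X := n%:R ^+ #|I| : R; set D := d ^+ s.+1; set N := n%:R ^+ s.+1 : R.
set c := fun y => (#|common_lines y|)%:R : R; move=> total.
set inj := [set y : {ffun 'I_s.+1 -> 'I_n} | injectiveb y].
have card_inj : #|inj| = (n ^_ s.+1)%N by rewrite card_inj_ffuns !card_ord.
have D_gt0 : 0 < D by rewrite exprn_gt0.
have X_ge0 : 0 <= X by rewrite exprn_ge0 ?ler0n.
have split : \sum_y c y = \sum_(y in inj) c y + \sum_(y in ~: inj) c y.
  rewrite (bigID (mem inj)) /= [X in _ = _ + X](eq_bigl (fun y => y \notin inj)) //.
  by move=> y; rewrite inE.
have card_noninj : #|~: inj|%:R <= D / 2 * N.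
  apply: le_trans (_ : (s.+1 * s.+1 * n ^ s)%:R <= _).
    by rewrite ler_nat card_noninjective_ffun.
  have -> : D / 2 * N = D * n%:R / 2 * n%:R ^+ s by rewrite /N exprSr; ring.
  rewrite natrM natrX ler_wpM2r ?exprn_ge0 ?ler0n // ler_pdivlMr //.
  by move: n_large; rewrite -mulnA natrM mulrC.
have noninj_le : \sum_(y in ~: inj) c y <= D / 2 * N * X.
  apply: le_trans (_ : \sum_(y in ~: inj) X <= _).
    apply: ler_sum => y _; rewrite /c /X -natrX ler_nat.
    by rewrite -[X in (_ <= X ^ _)%N](card_ord n) -card_ffun max_card.
  by rewrite sumr_const -[X *+ _]mulr_natl ler_wpM2r.
have inj_ge : #|inj|%:R * (D / 2 * X) <= \sum_(y in inj) c y.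
  have inj_le : #|inj|%:R <= N by rewrite card_inj /N -natrX ler_nat ffact_le_expn.
  have DX_ge0 : 0 <= D / 2 * X by rewrite mulr_ge0 ?divr_ge0 ?(ltW D_gt0).
  move: total; rewrite split; nra.
have [|y] := exists_ge_mean _ inj_ge; first by rewrite card_inj ffact_gt0.
by rewrite inE => /injectiveP y_inj; exists y.
Qed.

End AxisLines.

Section DenseBox.
Variables (R : realType) (I : finType).

Lemma dense_box_on (s : nat) (l : seq I) : uniq l -> forall d : R, 0 < d ->
  exists N0, forall n, (N0 <= n)%N ->
  forall W : {set {ffun I -> 'I_n}}, d * n%:R ^+ #|I| <= #|W|%:R ->
  exists (U : I -> {set 'I_n}) (g : {ffun I -> 'I_n}),
    (forall i, i \in l -> #|U i| = s.+1) /\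
    forall h : {ffun I -> 'I_n}, (forall i, i \notin l -> h i = g i) ->
      (forall i, i \in l -> h i \in U i) -> h \in W.
Proof.
elim: l => [_ d d_gt0|i0 l IHl /andP[i0l l_uniq] d d_gt0].
  exists 1%N => n n_gt0 W dW.
  have : 0 < #|W|%:R :> R by apply: lt_le_trans dW; rewrite mulr_gt0 // exprn_gt0 // ltr0n.
  rewrite ltr0n card_gt0 => /set0Pn[g gW].
  exists (fun _ => finset.set0), g; split => // h hg _.
  by suff -> : h = g by []; apply/ffunP => x; apply: hg.
have Ds_gt0 : 0 < d ^+ s.+1 / 2 by rewrite divr_gt0 // exprn_gt0.
have [N0 HN0] := IHl l_uniq _ Ds_gt0.
have [N1 _ HN1] := nbhs_infty_ger ((2 * s.+1 * s.+1)%:R / d ^+ s.+1).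
exists (maxn (maxn N0 s.+1) N1) => n; rewrite !geq_max => /andP[/andP[nN0 n_gt_s] nN1] W dW.
have n_large : (2 * s.+1 * s.+1)%:R <= d ^+ s.+1 * n%:R.
  by rewrite mulrC -ler_pdivrMr ?exprn_gt0 // HN1.
have [y y_inj dW'] := exists_injective_common_lines i0 n_gt_s d_gt0 n_large dW.
have [U [g [U_card U_W']]] := HN0 n nN0 _ dW'.
exists (fun i => if i == i0 then [set y j | j in 'I_s.+1] else U i), g; split.
  move=> i; rewrite inE; case: eqP => [-> _|/eqP i_neq /= il].
    by rewrite card_imset // card_ord.
  exact: U_card.
move=> h hg hU.
have /imsetP[j _ hj] : h i0 \in [set y j | j in 'I_s.+1].
  by have := hU i0; rewrite inE eqxx /= => /(_ isT).
have : fupd h i0 (g i0) \in common_lines W i0 y.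
  apply: U_W' => i; rewrite ffunE.
    case: eqP => [-> //|/eqP i_neq il]; apply: hg.
    by rewrite inE negb_or i_neq.
  case: eqP => [-> /(negP i0l)//|/eqP i_neq il].
  by have := hU i; rewrite inE il orbT (negbTE i_neq) => /(_ isT).
by rewrite inE => /forallP/(_ j); rewrite fupd_fupd -hj fupd_id.
Qed.

Lemma dense_box (s : nat) (d : R) : (0 < s)%N -> 0 < d ->
  exists N0, forall n, (N0 <= n)%N ->
  forall W : {set {ffun I -> 'I_n}}, d * n%:R ^+ #|I| <= #|W|%:R ->
  exists U : I -> {set 'I_n}, (forall i, #|U i| = s) /\
    forall h : {ffun I -> 'I_n}, (forall i, h i \in U i) -> h \in W.
Proof.
case: s => // s _ d_gt0; have [N0 HN0] := dense_box_on s (enum_uniq I) d_gt0.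
exists N0 => n nN0 W dW; have [U [g [U_card U_W]]] := HN0 n nN0 W dW.
by exists U; split => [i|h hU]; [apply: U_card | apply: U_W => i]; rewrite ?mem_enum.
Qed.

End DenseBox.

(** * Supersaturation *)

Section Supersaturation.
Variables (R : realType) (H : hypergraph).
Local Notation m := #|hV H|.

Lemma card_dense_subsets n N (G : {set {set 'I_n}}) (c e : R) :
  0 <= c -> (m <= N <= n)%N -> rsub G H -> c + e <= lubell R G ->
  'C(n, N)%:R * e <=
  #|[set A : {set 'I_n} | (#|A| == N) && (c < lubell_in R A G)]|%:R * (2 ^ N)%:R.
Proof.
move=> c0 /andP[mN Nn] rG dense.
have GN F : F \in G -> (#|F| <= N)%N.
  by move/(rsubP _ _ rG)/edge_sizesP=> [F' _ <-]; apply: leq_trans (max_card _) mN.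
set draws := [set A : {set 'I_n} | #|A| == N].
have card_draws_n : #|draws| = 'C(n, N) by rewrite card_draws card_ord.
have -> : [set A : {set 'I_n} | (#|A| == N) && (c < lubell_in R A G)] =
          [set A in draws | c < lubell_in R A G] by apply/setP => A; rewrite !inE.
rewrite -card_draws_n.
apply: (@reverse_markov R _ draws (fun A => lubell_in R A G) _ c e c0) => [A|].
  by rewrite inE => /eqP <-; apply: lubell_in_le_exp.
rewrite (eq_bigl (fun A : {set 'I_n} => #|A| == N)) => [|A]; last by rewrite inE.
by rewrite card_draws_n sum_lubell_in_ord // ler_wpM2l.
Qed.

Lemma card_dense_subsets_le n N (G : {set {set 'I_n}}) (c : R) :
  (m <= N)%N -> pi_n R H N <= c -> rsub G H ->
  (#|[set A : {set 'I_n} | (#|A| == N) && (c < lubell_in R A G)%R]| <=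
   #|copies H G| * 'C(n - m, N - m))%N.
Proof.
move=> mN piN rG.
pose sups (f : {ffun hV H -> 'I_n}) :=
  [set A : {set 'I_n} | f @: [set: hV H] \subset A & #|A| == N].
apply: leq_trans (_ : #|\bigcup_(f in copies H G) sups f| <= _)%N.
  apply/subset_leq_card/fintype.subsetP => A; rewrite inE => /andP[/eqP cA cA_lt].
  have : embeds_in H A G.
    apply: contrapT => nHA; have := lubell_in_le_pi_n R (fun F FG _ => rsubP _ _ rG F FG) nHA.
    by rewrite cA => h; have := le_trans h piN; rewrite leNgt cA_lt.
  case=> f [f_inj fA fG]; apply/bigcupP; exists f; first exact/copiesP.
  rewrite inE cA eqxx andbT.
  by apply/fintype.subsetP => _ /imsetP[x _ ->].
apply: leq_trans (card_bigcup_le _ _) _; rewrite -sum_nat_const.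
apply: leq_sum => f /copiesP[f_inj _].
have im_card : #|f @: [set: hV H]| = m by rewrite card_imset // cardsT.
by rewrite card_supsets im_card ?card_ord.
Qed.

Lemma supersaturation (e : R) : 0 < e ->
  exists2 d : R, 0 < d & exists N0, forall n, (N0 <= n)%N ->
  forall G : {set {set 'I_n}}, rsub G H -> hpi R H + e <= lubell R G ->
  d * n%:R ^+ m <= #|copies H G|%:R.
Proof.
move=> e_gt0; set c := hpi R H + e / 2.
have [N1 _ piN1] : \forall N \near \oo%classic, pi_n R H N < c.
  by apply: cvgr_lt; [exact: pi_n_is_cvg | rewrite ltrDl divr_gt0].
set N := maxn N1 m; have mN : (m <= N)%N := leq_maxr _ _.
have piN : pi_n R H N <= c by rewrite ltW // piN1 //= leq_maxl.
set K := (2 ^ N * 'C(N, m) * (2 ^ m * m`!))%N.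
have K_gt0 : (0 < K)%N by rewrite !muln_gt0 !expn_gt0 bin_gt0 mN fact_gt0.
exists (e / 2 / K%:R); first by rewrite !divr_gt0 ?ltr0n.
exists (maxn N (2 * m)) => n; rewrite geq_max => /andP[Nn mn] G rG dense.
have c_ge0 : 0 <= c by rewrite addr_ge0 ?hpi_ge0 ?divr_ge0 ?ltW.
have dense' : c + e / 2 <= lubell R G by rewrite /c -addrA -splitr.
have mNn : (m <= N <= n)%N by rewrite mN Nn.
have many_B := card_dense_subsets c_ge0 mNn rG dense'.
have B_le := card_dense_subsets_le mN piN rG.
set E := e / 2 in many_B *; set q := 'C(n - m, N - m).
have E_ge0 : 0 <= E by rewrite divr_ge0 ?ltW.
have q_gt0 : 0 < q%:R :> R by rewrite ltr0n bin_gt0 leq_sub2r.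
have copies_ge : 'C(n, m)%:R * E <= (#|copies H G| * (2 ^ N * 'C(N, m)))%:R.
  rewrite -(ler_pM2r q_gt0) mulrAC -natrM bin_mul_subset ?mN //.
  rewrite natrM mulrAC; apply: le_trans (ler_wpM2r (ler0n _ _) many_B) _.
  by rewrite -!natrM ler_nat -mulnA mulnAC leq_mul2r B_le orbT.
rewrite mulrAC ler_pdivrMr ?ltr0n // -natrX.
apply: le_trans (_ : ('C(n, m) * (2 ^ m * m`!))%:R * E <= _).
  by rewrite mulrC ler_wpM2r // ler_nat expn_le_bin.
rewrite natrM mulrAC; apply: le_trans (ler_wpM2r (ler0n _ _) copies_ge) _.
by rewrite -!natrM ler_nat /K !mulnA.
Qed.

Lemma hsub_blowup_dense (s : nat) (e : R) :
  (0 < s)%N -> 0 < e ->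
  exists N0, forall n, (N0 <= n)%N -> forall G : {set {set 'I_n}},
  rsub G H -> hpi R H + e <= lubell R G -> hsub (blowup H s) (hgraph_on G).
Proof.
move=> s_gt0 e_gt0; have [d d_gt0 [N1 HN1]] := supersaturation e_gt0.
have [N2 HN2] := dense_box (hV H) s_gt0 d_gt0.
exists (maxn N1 N2) => n; rewrite geq_max => /andP[nN1 nN2] G rG dense.
have [U [U_card U_box]] := HN2 n nN2 _ (HN1 n nN1 G rG dense).
exact: blowup_hsub_box U_card U_box.
Qed.

End Supersaturation.

Section Convergence.
Local Open Scope classical_set_scope.

Lemma pi_n_cvg_hpi_blowup (R : realType) (H H' : hypergraph) (s : nat) :
  (0 < s)%N -> hsub H' H -> hsub H (blowup H' s) -> pi_n R H @ \oo --> hpi R H'.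
Proof.
move=> s_gt0 H'H HH's; apply/cvgrPdist_le => e e_gt0.
have [N0 HN0] := hsub_blowup_dense H' s_gt0 e_gt0.
exists (maxn N0 #|hV H'|) => // n /=; rewrite geq_max => /andP[nN0 nH'].
rewrite distrC ler_distl; apply/andP; split.
  apply: le_trans _ (le_trans (hpi_le_pi_n R nH') (pi_n_hsub R n H'H)).
  by rewrite lerBlDr lerDl ltW.
apply: pi_n_le => [|G rG nHG]; first by rewrite addr_ge0 ?hpi_ge0 ?ltW.
rewrite leNgt; apply: contraNN nHG => dense; apply: (hsub_trans HH's).
apply: (HN0 n nN0 G _ (ltW dense)); apply: rsub_edge_sizes rG.
by move=> k /(edge_sizes_hsub HH's)/edge_sizes_blowup.
Qed.

End Convergence.

Unset Implicit Arguments.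

Theorem mainTheorem5 (R : realType) (H H' : hypergraph) (s : nat) :
  (2 <= s)%N -> hsub H' H -> hsub H (blowup H' s) -> hpi R H = hpi R H'.
Proof.
move=> s_ge2 H'H HH's; rewrite /hpi.
by have /cvg_lim -> := pi_n_cvg_hpi_blowup (R := R) (ltnW s_ge2) H'H HH's.
Qed.
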